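(* Let $\varepsilon>0$, $y_0\in(-1,0]$, and set $\varepsilon_1=\varepsilon/(1+y_0)^2$, $\varepsilon_2=\varepsilon/(1-y_0)^2$, $a=(1+y_0)/(1-y_0)\in(0,1]$. Let $c_1,c_2>0$. Let $\Omega=(\omega_1,\omega_2)^T$ be a classical solution on $[0,1]\times[t_0,\infty)$ of $$\partial_t\omega_i(x,t)=\varepsilon_i\,\partial_x^2\omega_i(x,t)-c_i\,\omega_i(x,t),\quad i=1,2,$$ with $$\omega_1(0,t)=\omega_2(0,t),\qquad \partial_x\omega_1(0,t)+a\,\partial_x\omega_2(0,t)=0,\qquad \omega_1(1,t)=\omega_2(1,t)=0 .$$ Then for all $t\ge t_0$, $$\|\Omega(\cdot,t)\|_{L^2}\le \Pi\, e^{-\gamma(t-t_0)}\,\|\Omega(\cdot,t_0)\|_{L^2},\qquad \Pi=a^{-3/2},\quad \gamma=\min\{a^3c_1,\,c_2\}+\frac{\varepsilon_2}{4},$$ where $\|\Omega(\cdot,t)\|_{L^2}^2=\int_0^1(\omega_1(x,t)^2+\omega_2(x,t)^2)\,dx$.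
   Context: This is the ''folded target system'': the boundary conditions at $x=0$ encode continuity of the unfolded state and of its spatial derivative at the folding point $y_0$. *)

From Stdlib Require Import Reals.
Open Scope R_scope.

Definition closed_dom (t0 x t : R) : Prop := 0 <= x <= 1 /\ t0 <= t.
Definition open_dom (t0 x t : R) : Prop := 0 < x < 1 /\ t0 < t.

Definition cont2_on (D : R -> R -> Prop) (f : R -> R -> R) : Prop :=
  forall x t, D x t -> forall e, 0 < e -> exists d, 0 < d /\
    forall y s, D y s -> Rabs (y - x) < d -> Rabs (s - t) < d ->
      Rabs (f y s - f x t) < e.

(* w is of class C^{2,1} on [0,1] x [t0,oo) (derivatives continuous up to the
   boundary), with  wx = d_x w,  wxx = d_x^2 w,  wt = d_t w, and solves
   d_t w = eps * d_x^2 w - c * w there. *)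
Definition classical_sol (eps c t0 : R) (w wx wxx wt : R -> R -> R) : Prop :=
  (forall x t, open_dom t0 x t ->
     derivable_pt_lim (fun y => w y t) x (wx x t) /\
     derivable_pt_lim (fun y => wx y t) x (wxx x t) /\
     derivable_pt_lim (fun s => w x s) t (wt x t)) /\
  cont2_on (closed_dom t0) w /\ cont2_on (closed_dom t0) wx /\
  cont2_on (closed_dom t0) wxx /\ cont2_on (closed_dom t0) wt /\
  (forall x t, closed_dom t0 x t -> wt x t = eps * wxx x t - c * w x t).

Definition L2_integrand (w1 w2 : R -> R -> R) (t : R) : R -> R :=
  fun x => w1 x t ^ 2 + w2 x t ^ 2.

From Stdlib Require Import Reals Lra Psatz.
From Coquelicot Require Import Coquelicot.
Open Scope R_scope.

(* With k = 1/a >= 1 consider the weighted energy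
     E(s) = \int_0^1 (w1(x,s)^2 + k w2(x,s)^2) dx.
   Along the PDE, E'(s) = \int 2 w1 (eps1 w1'' - c1 w1) + 2 k w2 (eps2 w2'' - c2 w2).
   The multiplier
     G(x) = 2 eps1 w1 w1' + 2 eps2 k w2 w2' + x (eps1 w1^2 + eps2 k w2^2)
   vanishes at x = 1 (Dirichlet condition) and at x = 0 (the transmission
   conditions, since eps2 k = eps1 a), so \int_0^1 G' = 0; and pointwise the
   integrand of E' + 2 gamma E is bounded by G' thanks to
   2 q^2 + p^2 + 2 x p q >= p^2 / 2 on [0,1].  Hence E' <= -2 gamma E and
   E(t) <= e^{-2 gamma (t - t0)} E(t0); comparing E with the L^2 norm
   (||.||^2 <= E <= k ||.||^2, and k <= a^{-3} = Pi^2) gives the theorem. *)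

(* Projection of R onto [0,1]: composing with it turns a function known on
   [0,1] into a function on R that agrees with it on [0,1]. *)
Definition clamp01 (x : R) : R := Rmax 0 (Rmin 1 x).

Lemma clamp01_id x : 0 <= x <= 1 -> clamp01 x = x.
Proof. intros; unfold clamp01, Rmax, Rmin; repeat destruct Rle_dec; lra. Qed.

Lemma clamp01_range x : 0 <= clamp01 x <= 1.
Proof. unfold clamp01, Rmax, Rmin; repeat destruct Rle_dec; lra. Qed.

Lemma clamp01_lipschitz x y : Rabs (clamp01 y - clamp01 x) <= Rabs (y - x).
Proof.
  unfold clamp01, Rmax, Rmin; repeat destruct Rle_dec;
  unfold Rabs; repeat destruct Rcase_abs; lra.
Qed.

Lemma Rmax_lipschitz c x y : Rabs (Rmax c y - Rmax c x) <= Rabs (y - x).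
Proof. unfold Rmax; repeat destruct Rle_dec; unfold Rabs; repeat destruct Rcase_abs; lra. Qed.

Lemma continuity_pt_clamp01 x : continuity_pt (fun y => clamp01 y) x.
Proof.
  intros e He. exists e; split; [exact He |]. intros y [_ Hy]. simpl in *.
  unfold R_dist in *. eapply Rle_lt_trans; [apply clamp01_lipschitz | exact Hy].
Qed.

(* f is continuous on [0,1] (one-sidedly at the endpoints). *)
Definition cont01 (f : R -> R) : Prop :=
  forall x, continuity_pt (fun y => f (clamp01 y)) x.

(* Continuity and derivative rules in the lambda form needed for backward
   chaining on expressions such as (fun y => f y * g y). *)
Lemma cont_plus f g x : continuity_pt f x -> continuity_pt g x ->
  continuity_pt (fun y => f y + g y) x.
Proof. apply (continuity_pt_plus f g). Qed.

Lemma cont_minus f g x : continuity_pt f x -> continuity_pt g x ->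
  continuity_pt (fun y => f y - g y) x.
Proof. apply (continuity_pt_minus f g). Qed.

Lemma cont_mult f g x : continuity_pt f x -> continuity_pt g x ->
  continuity_pt (fun y => f y * g y) x.
Proof. apply (continuity_pt_mult f g). Qed.

Lemma cont_const c x : continuity_pt (fun _ => c) x.
Proof. apply continuity_pt_const. intros u v; reflexivity. Qed.

Lemma cont_sqr f x : continuity_pt f x -> continuity_pt (fun y => f y ^ 2) x.
Proof.
  intros H. apply continuity_pt_ext with (fun y => f y * f y).
  - intros y; ring.
  - now apply cont_mult.
Qed.

Lemma deriv_plus f g x a b : derivable_pt_lim f x a -> derivable_pt_lim g x b ->
  derivable_pt_lim (fun y => f y + g y) x (a + b).
Proof. apply (derivable_pt_lim_plus f g). Qed.

Lemma deriv_minus f g x a b : derivable_pt_lim f x a -> derivable_pt_lim g x b ->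
  derivable_pt_lim (fun y => f y - g y) x (a - b).
Proof. apply (derivable_pt_lim_minus f g). Qed.

Lemma deriv_mult f g x a b : derivable_pt_lim f x a -> derivable_pt_lim g x b ->
  derivable_pt_lim (fun y => f y * g y) x (a * g x + f x * b).
Proof. apply (derivable_pt_lim_mult f g). Qed.

Lemma deriv_sqr f x a : derivable_pt_lim f x a ->
  derivable_pt_lim (fun y => f y ^ 2) x (2 * f x * a).
Proof.
  intros H. apply (derivable_pt_lim_comp f (fun z => z ^ 2)); [exact H |].
  replace (2 * f x) with (INR 2 * f x ^ Nat.pred 2) by (simpl; ring).
  apply derivable_pt_lim_pow.
Qed.

Lemma deriv_const c x : derivable_pt_lim (fun _ => c) x 0.
Proof. apply (derivable_pt_lim_const c). Qed.

Lemma deriv_id x : derivable_pt_lim (fun y => y) x 1.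
Proof. apply (derivable_pt_lim_id x). Qed.

Lemma deriv_exp g x l : derivable_pt_lim g x l ->
  derivable_pt_lim (fun s => exp (g s)) x (exp (g x) * l).
Proof. intros H. apply (derivable_pt_lim_comp g exp); [exact H | apply derivable_pt_lim_exp]. Qed.

Lemma deriv_eq f x l l' : derivable_pt_lim f x l -> l = l' -> derivable_pt_lim f x l'.
Proof. now intros H <-. Qed.

Ltac continuity_rules :=
  unfold cont01 in *; cbv beta;
  repeat first [ apply cont_const | apply cont_minus | apply cont_plus
               | apply cont_sqr | apply cont_mult | apply continuity_pt_clamp01
               | match goal with H : forall _ : R, continuity_pt _ _ |- _ => apply H end ].

Ltac derivative_rules :=
  repeat first [ apply deriv_const | apply deriv_minus | apply deriv_plus
               | apply deriv_sqr | apply deriv_mult | apply deriv_id | eassumption ].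

Lemma deriv_local f g x l d : 0 < d -> (forall y, Rabs (y - x) < d -> f y = g y) ->
  derivable_pt_lim f x l -> derivable_pt_lim g x l.
Proof.
  intros Hd Heq H e He. destruct (H e He) as [del Hdel].
  assert (Hpos : 0 < Rmin del d) by (apply Rmin_pos; [apply cond_pos | lra]).
  exists (mkposreal _ Hpos). intros h Hh0 Hh. simpl in Hh.
  pose proof (Rmin_l del d). pose proof (Rmin_r del d).
  rewrite <- !Heq.
  - apply Hdel; [exact Hh0 | lra].
  - rewrite Rminus_eq_0, Rabs_R0; lra.
  - replace (x + h - x) with h by ring. lra.
Qed.

Definition extend (t0 : R) (w : R -> R -> R) (x t : R) : R := w (clamp01 x) (Rmax t0 t).

Lemma extend_eq t0 w x t : closed_dom t0 x t -> extend t0 w x t = w x t.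
Proof.
  intros [Hx Ht]. unfold extend. now rewrite clamp01_id, Rmax_right.
Qed.

Lemma extend_continuous t0 w : cont2_on (closed_dom t0) w ->
  forall x t, continuity_2d_pt (extend t0 w) x t.
Proof.
  intros H x t e.
  assert (Hd : closed_dom t0 (clamp01 x) (Rmax t0 t)) by (split; [apply clamp01_range | apply Rmax_l]).
  destruct (H _ _ Hd e (cond_pos e)) as [d [Hdpos Hclose]].
  exists (mkposreal d Hdpos). intros u v Hu Hv. simpl in *.
  apply Hclose.
  - split; [apply clamp01_range | apply Rmax_l].
  - eapply Rle_lt_trans; [apply clamp01_lipschitz | exact Hu].
  - eapply Rle_lt_trans; [apply Rmax_lipschitz | exact Hv].
Qed.

Lemma continuity_2d_pt_sqr f x t : continuity_2d_pt f x t ->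
  continuity_2d_pt (fun u v => f u v ^ 2) x t.
Proof.
  intros H. apply continuity_2d_pt_ext with (fun u v => f u v * f u v).
  - intros u v; ring.
  - now apply continuity_2d_pt_mult.
Qed.

Lemma continuity_2d_pt_slice f x t : continuity_2d_pt f x t ->
  continuity_pt (fun u => f u t) x.
Proof.
  intros H e He. destruct (H (mkposreal e He)) as [d Hd].
  exists d; split; [apply cond_pos |]. intros u [_ Hu]. simpl in *. unfold R_dist in *.
  apply Hd; [exact Hu | rewrite Rminus_eq_0, Rabs_R0; apply cond_pos].
Qed.

Lemma cont01_slice t0 w t : cont2_on (closed_dom t0) w -> t0 <= t ->
  cont01 (fun x => w x t).
Proof.
  intros H Ht x.
  apply continuity_pt_ext with (fun y => extend t0 w y t).
  - intros y. unfold extend. now rewrite Rmax_right.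
  - now apply continuity_2d_pt_slice, extend_continuous.
Qed.

(* Real-valued forms of Coquelicot's linearity lemmas for RInt. *)
Lemma RInt_minusR f g a b : ex_RInt f a b -> ex_RInt g a b ->
  RInt (fun x => f x - g x) a b = RInt f a b - RInt g a b.
Proof. intros Hf Hg. exact (RInt_minus f g a b Hf Hg). Qed.

Lemma RInt_scalR f a b k : ex_RInt f a b -> RInt (fun x => k * f x) a b = k * RInt f a b.
Proof. intros Hf. exact (RInt_scal f a b k Hf). Qed.

Lemma ex_RInt_minusR f g a b : ex_RInt f a b -> ex_RInt g a b ->
  ex_RInt (fun x => f x - g x) a b.
Proof. intros Hf Hg. exact (ex_RInt_minus f g a b Hf Hg). Qed.

Lemma ex_RInt_scalR f a b k : ex_RInt f a b -> ex_RInt (fun x => k * f x) a b.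
Proof. intros Hf. exact (ex_RInt_scal f a b k Hf). Qed.

Lemma RInt_const01 (c : R) : @RInt R_CompleteNormedModule (fun _ => c) 0 1 = c.
Proof. rewrite RInt_const. unfold scal; simpl; unfold mult; simpl. ring. Qed.

Lemma ex_RInt_cont01 f : cont01 f -> ex_RInt f 0 1.
Proof.
  intros H. apply ex_RInt_ext with (fun y => f (clamp01 y)).
  - intros x Hx. rewrite Rmin_left, Rmax_right in Hx by lra. rewrite clamp01_id; [reflexivity | lra].
  - apply (ex_RInt_continuous (V := R_CompleteNormedModule)). intros z _.
    apply continuity_pt_filterlim, H.
Qed.

Lemma RInt_abs_le f c : ex_RInt f 0 1 -> (forall x, 0 < x < 1 -> Rabs (f x) <= c) ->
  Rabs (RInt f 0 1) <= c.
Proof.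
  intros Hf Hb. apply Rabs_le. split.
  - rewrite <- (RInt_const01 (- c)). apply RInt_le; [lra | apply ex_RInt_const | exact Hf |].
    intros x Hx. specialize (Hb x Hx). apply Rabs_le_between in Hb. lra.
  - rewrite <- (RInt_const01 c). apply RInt_le; [lra | exact Hf | apply ex_RInt_const |].
    intros x Hx. specialize (Hb x Hx). apply Rabs_le_between in Hb. lra.
Qed.

Lemma RInt_derivative01 (G g : R -> R) :
  (forall x, 0 < x < 1 -> derivable_pt_lim G x (g x)) -> cont01 G -> cont01 g ->
  RInt g 0 1 = G 1 - G 0.
Proof.
  intros HD HG Hg.
  set (gc := fun y => g (clamp01 y)).
  set (P := fun b => RInt gc 0 b).
  assert (DP : forall b, is_derive P b (gc b)).
  { intros b. apply (is_derive_RInt gc P 0 b).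
    - apply filter_forall. intros c. apply (RInt_correct (V := R_CompleteNormedModule)).
      apply (ex_RInt_continuous (V := R_CompleteNormedModule)). intros z _.
      apply continuity_pt_filterlim, Hg.
    - apply continuity_pt_filterlim, Hg. }
  (* G o clamp01 - P has zero derivative on (0,1), hence is constant there *)
  destruct (MVT_gen (fun y => G (clamp01 y) - P y) 0 1 (fun _ => 0)) as [c [_ Hc]].
  - intros x Hx. rewrite Rmin_left, Rmax_right in Hx by lra.
    apply is_derive_Reals, deriv_eq with (g x - gc x).
    + apply deriv_minus; [| now apply is_derive_Reals].
      apply deriv_local with G (Rmin x (1 - x)); [apply Rmin_pos; lra | | now apply HD].
      intros y Hy. pose proof (Rmin_l x (1 - x)). pose proof (Rmin_r x (1 - x)).
      apply Rabs_def2 in Hy. rewrite clamp01_id; [reflexivity | lra].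
    + unfold gc. rewrite clamp01_id; lra.
  - intros x _. apply cont_minus; [apply HG |].
    apply continuity_pt_filterlim, (ex_derive_continuous (K := R_AbsRing) (V := R_NormedModule) P).
    exists (gc x). apply DP.
  - unfold P in Hc. rewrite RInt_point, clamp01_id, (clamp01_id 0) in Hc by lra.
    replace (RInt g 0 1) with (RInt gc 0 1).
    + unfold zero in Hc; simpl in Hc. lra.
    + apply RInt_ext. intros x Hx. rewrite Rmin_left, Rmax_right in Hx by lra.
      unfold gc. rewrite clamp01_id; lra.
Qed.

Lemma ex_RInt_slice F s : (forall x t, continuity_2d_pt F x t) ->
  ex_RInt (fun x => F x s) 0 1.
Proof.
  intros HF. apply (ex_RInt_continuous (V := R_CompleteNormedModule)). intros z _.
  apply continuity_pt_filterlim, continuity_2d_pt_slice, HF.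
Qed.

Lemma RInt_param_continuous F : (forall x t, continuity_2d_pt F x t) ->
  forall s, continuity_pt (fun s => RInt (fun x => F x s) 0 1) s.
Proof.
  intros HF s e He.
  assert (He2 : 0 < e / 2) by lra.
  destruct (uniform_continuity_2d_1d F 0 1 s (fun x _ => HF x s) (mkposreal _ He2)) as [d Hd].
  exists d. split; [apply cond_pos |]. intros v [_ Hv]. simpl in *. unfold R_dist in *.
  rewrite <- RInt_minusR by (apply ex_RInt_slice; exact HF).
  apply Rle_lt_trans with (e / 2); [| lra].
  apply RInt_abs_le; [apply ex_RInt_minusR; apply ex_RInt_slice; exact HF |].
  intros x Hx. left. apply Rabs_def2 in Hv. apply (Hd x s x v); try lra.
  rewrite Rminus_eq_0, Rabs_R0. apply cond_pos.
Qed.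

Lemma linearization_error f df s h e :
  (forall r, Rabs (r - s) <= Rabs h -> derivable_pt_lim f r (df r)) ->
  (forall r, Rabs (r - s) <= Rabs h -> Rabs (df r - df s) <= e) ->
  Rabs (f (s + h) - f s - h * df s) <= e * Rabs h.
Proof.
  intros HD Hclose.
  assert (Hseg : forall r, Rmin s (s + h) <= r <= Rmax s (s + h) -> Rabs (r - s) <= Rabs h).
  { intros r. unfold Rmin, Rmax; destruct Rle_dec; unfold Rabs; repeat destruct Rcase_abs; lra. }
  destruct (MVT_gen f s (s + h) df) as [c [Hc Heq]].
  - intros r Hr. apply is_derive_Reals, HD, Hseg. lra.
  - intros r Hr. apply derivable_continuous_pt. exists (df r). apply HD, Hseg, Hr.
  - rewrite Heq. replace (df c * (s + h - s) - h * df s) with (h * (df c - df s)) by ring.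
    rewrite Rabs_mult, Rmult_comm. apply Rmult_le_compat_r; [apply Rabs_pos |].
    apply Hclose, Hseg, Hc.
Qed.

Lemma difference_quotient_close A B I h e : h <> 0 -> 0 < e ->
  Rabs (A - B - h * I) <= e / 2 * Rabs h -> Rabs ((A - B) / h - I) < e.
Proof.
  intros Hh He Hlin. assert (Hhpos : 0 < Rabs h) by (apply Rabs_pos_lt; exact Hh).
  replace ((A - B) / h - I) with ((A - B - h * I) / h) by (field; exact Hh).
  rewrite Rabs_div by exact Hh.
  apply Rle_lt_trans with (e / 2); [| lra].
  apply Rmult_le_reg_r with (Rabs h); [exact Hhpos |].
  unfold Rdiv at 1. rewrite Rmult_assoc, Rinv_l by lra. lra.
Qed.

Lemma RInt_param_derivable F Ft t0 :
  (forall x s, continuity_2d_pt F x s) -> (forall x s, continuity_2d_pt Ft x s) ->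
  (forall x s, 0 < x < 1 -> t0 < s -> derivable_pt_lim (fun s => F x s) s (Ft x s)) ->
  forall s, t0 < s ->
  derivable_pt_lim (fun s => RInt (fun x => F x s) 0 1) s (RInt (fun x => Ft x s) 0 1).
Proof.
  intros HF HFt HD s Hs e He.
  assert (He2 : 0 < e / 2) by lra.
  destruct (uniform_continuity_2d_1d Ft 0 1 s (fun x _ => HFt x s) (mkposreal _ He2)) as [d Hd].
  assert (Hdpos : 0 < Rmin d ((s - t0) / 2)) by (apply Rmin_pos; [apply cond_pos | lra]).
  exists (mkposreal _ Hdpos). intros h Hh0 Hh. simpl in Hh.
  pose proof (Rmin_l d ((s - t0) / 2)). pose proof (Rmin_r d ((s - t0) / 2)).
  assert (Hslice : forall x, 0 < x < 1 -> Rabs (F x (s + h) - F x s - h * Ft x s) <= e / 2 * Rabs h).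
  { intros x Hx. apply (linearization_error (fun r => F x r) (Ft x)); intros r Hr;
      apply Rabs_le_between in Hr.
    - apply HD; [exact Hx | lra].
    - left. apply (Hd x s x r); try lra. rewrite Rminus_eq_0, Rabs_R0. apply cond_pos. }
  assert (Hlin : RInt (fun x => F x (s + h) - F x s - h * Ft x s) 0 1 =
     RInt (fun x => F x (s + h)) 0 1 - RInt (fun x => F x s) 0 1 - h * RInt (fun x => Ft x s) 0 1).
  { pose proof (ex_RInt_slice F (s + h) HF). pose proof (ex_RInt_slice F s HF).
    pose proof (ex_RInt_slice Ft s HFt).
    rewrite RInt_minusR, RInt_minusR, RInt_scalR;
      auto using ex_RInt_minusR, ex_RInt_scalR. }
  assert (Hbound : Rabs (RInt (fun x => F x (s + h) - F x s - h * Ft x s) 0 1) <= e / 2 * Rabs h).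
  { apply RInt_abs_le; [| exact Hslice].
    apply ex_RInt_minusR; [apply ex_RInt_minusR | apply ex_RInt_scalR]; apply ex_RInt_slice; assumption. }
  rewrite Hlin in Hbound. now apply difference_quotient_close.
Qed.

Lemma nonincreasing_of_nonpos_derivative f df a b : a <= b ->
  (forall x, a <= x <= b -> continuity_pt f x) ->
  (forall x, a < x < b -> derivable_pt_lim f x (df x)) ->
  (forall x, a < x < b -> df x <= 0) ->
  f b <= f a.
Proof.
  intros Hab Hc HD Hneg. destruct (Req_dec a b) as [<- | Hne]; [lra |].
  set (pr := fun c (Hc : a < c < b) => exist (derivable_pt_abs f c) (df c) (HD c Hc)).
  destruct (MVT f id a b pr (fun c _ => derivable_pt_id c)) as [c [Hcab Heq]];
    [lra | exact Hc | intros x _; apply derivable_continuous_pt, derivable_pt_id |].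
  rewrite derive_pt_id in Heq. simpl in Heq. unfold id in Heq.
  specialize (Hneg c Hcab). nra.
Qed.

Lemma exponential_decay E dE g t0 t : t0 <= t ->
  (forall s, t0 <= s <= t -> continuity_pt E s) ->
  (forall s, t0 < s < t -> derivable_pt_lim E s (dE s)) ->
  (forall s, t0 < s < t -> dE s <= - g * E s) ->
  E t <= exp (- g * (t - t0)) * E t0.
Proof.
  intros Ht HC HD Hrate.
  set (X := fun s => exp (g * (s - t0))).
  assert (DX : forall s, derivable_pt_lim X s (X s * g)).
  { intros s. apply (deriv_exp (fun s => g * (s - t0))).
    eapply deriv_eq; [derivative_rules | cbv beta; ring]. }
  (* E e^{g (s - t0)} is nonincreasing *)
  assert (Hmono : E t * X t <= E t0 * X t0).
  { apply (nonincreasing_of_nonpos_derivative (fun s => E s * X s)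
             (fun s => dE s * X s + E s * (X s * g))); [exact Ht | | |].
    - intros s Hs. apply cont_mult; [now apply HC |].
      apply derivable_continuous_pt. exists (X s * g). apply DX.
    - intros s Hs. apply deriv_mult; [now apply HD | apply DX].
    - intros s Hs. pose proof (Hrate s Hs). pose proof (exp_pos (g * (s - t0))).
      unfold X. nra. }
  unfold X in Hmono. rewrite Rminus_diag, Rmult_0_r, exp_0, Rmult_1_r in Hmono.
  replace (- g * (t - t0)) with (- (g * (t - t0))) by ring. rewrite exp_Ropp.
  pose proof (exp_pos (g * (t - t0))).
  apply Rmult_le_reg_r with (exp (g * (t - t0))); [lra |].
  replace (/ exp (g * (t - t0)) * E t0 * exp (g * (t - t0))) with (E t0) by (field; lra).
  exact Hmono.
Qed.

(* Completing the square in q: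
   2 q^2 + p^2 + 2 x p q = 2 (q + x p / 2)^2 + (1 - x^2) p^2 / 2 >= p^2 / 2. *)
Lemma multiplier_quadratic_bound x p q : 0 <= x <= 1 ->
  p ^ 2 / 2 <= 2 * q ^ 2 + p ^ 2 + 2 * x * p * q.
Proof.
  intros Hx. pose proof (pow2_ge_0 (q + x * p / 2)).
  assert (0 <= p ^ 2 * (1 - x ^ 2)) by (apply Rmult_le_pos; [apply pow2_ge_0 | nra]).
  nra.
Qed.

(* Pointwise estimate for one component: the energy-rate density plus
   rate times the energy density is dominated by the derivative of the
   multiplier 2 e p q + x e p^2 (with q = p', r = p''). *)
Lemma pointwise_dissipation x p q r e c rate : 0 <= x <= 1 -> 0 <= e ->
  rate <= e / 2 + 2 * c ->
  2 * p * (e * r - c * p) + rate * p ^ 2 <= 2 * e * (q ^ 2 + p * r) + e * (p ^ 2 + 2 * x * p * q).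
Proof.
  intros Hx He Hrate. pose proof (multiplier_quadratic_bound x p q Hx).
  assert (e * (p ^ 2 / 2) <= e * (2 * q ^ 2 + p ^ 2 + 2 * x * p * q)) by (apply Rmult_le_compat_l; lra).
  assert (0 <= (e / 2 + 2 * c - rate) * p ^ 2) by (apply Rmult_le_pos; [lra | apply pow2_ge_0]).
  nra.
Qed.

Section SliceDissipation.
Variables (p1 q1 r1 p2 q2 r2 : R -> R) (e1 e2 c1 c2 k rate : R).
Hypotheses (He1 : 0 <= e1) (He2 : 0 <= e2) (Hk : 0 < k)
  (Hrate1 : rate <= e1 / 2 + 2 * c1) (Hrate2 : rate <= e2 / 2 + 2 * c2).
Hypotheses (Dp1 : forall x, 0 < x < 1 -> derivable_pt_lim p1 x (q1 x))
  (Dq1 : forall x, 0 < x < 1 -> derivable_pt_lim q1 x (r1 x))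
  (Dp2 : forall x, 0 < x < 1 -> derivable_pt_lim p2 x (q2 x))
  (Dq2 : forall x, 0 < x < 1 -> derivable_pt_lim q2 x (r2 x)).
Hypotheses (Cp1 : cont01 p1) (Cq1 : cont01 q1) (Cr1 : cont01 r1)
  (Cp2 : cont01 p2) (Cq2 : cont01 q2) (Cr2 : cont01 r2).
Hypotheses (Hp1 : p1 1 = 0) (Hp2 : p2 1 = 0)
  (Hflux : e1 * p1 0 * q1 0 + e2 * k * p2 0 * q2 0 = 0).

Let G (x : R) : R :=
  2 * e1 * p1 x * q1 x + 2 * e2 * k * p2 x * q2 x + x * (e1 * p1 x ^ 2 + e2 * k * p2 x ^ 2).
Let dG (x : R) : R :=
  2 * e1 * (q1 x ^ 2 + p1 x * r1 x) + e1 * (p1 x ^ 2 + 2 * x * p1 x * q1 x)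
  + k * (2 * e2 * (q2 x ^ 2 + p2 x * r2 x) + e2 * (p2 x ^ 2 + 2 * x * p2 x * q2 x)).

Lemma cont01_dG : cont01 dG.
Proof. intros x. unfold dG. continuity_rules. Qed.

(* The boundary conditions make G vanish at both ends of [0,1]. *)
Lemma multiplier_integral_zero : RInt dG 0 1 = 0.
Proof.
  rewrite (RInt_derivative01 G dG).
  - unfold G. rewrite Hp1, Hp2. lra.
  - intros x Hx. specialize (Dp1 x Hx). specialize (Dq1 x Hx).
    specialize (Dp2 x Hx). specialize (Dq2 x Hx).
    unfold G, dG. eapply deriv_eq; [derivative_rules | cbv beta; ring].
  - intros x. unfold G. continuity_rules.
  - exact cont01_dG.
Qed.

Lemma slice_dissipation :
  RInt (fun x => 2 * p1 x * (e1 * r1 x - c1 * p1 x) + k * (2 * p2 x * (e2 * r2 x - c2 * p2 x))) 0 1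
  <= - rate * RInt (fun x => p1 x ^ 2 + k * p2 x ^ 2) 0 1.
Proof.
  assert (Eu : ex_RInt (fun x => p1 x ^ 2 + k * p2 x ^ 2) 0 1).
  { apply ex_RInt_cont01. intros x. continuity_rules. }
  apply Rle_trans with (RInt (fun x => dG x - rate * (p1 x ^ 2 + k * p2 x ^ 2)) 0 1).
  - apply RInt_le; [lra | | |].
    + apply ex_RInt_cont01. intros x. continuity_rules.
    + apply ex_RInt_minusR; [apply ex_RInt_cont01, cont01_dG | now apply ex_RInt_scalR].
    + intros x Hx. assert (Hx' : 0 <= x <= 1) by lra.
      pose proof (pointwise_dissipation x (p1 x) (q1 x) (r1 x) e1 c1 rate Hx' He1 Hrate1).
      pose proof (pointwise_dissipation x (p2 x) (q2 x) (r2 x) e2 c2 rate Hx' He2 Hrate2).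
      unfold dG. nra.
  - rewrite RInt_minusR, RInt_scalR, multiplier_integral_zero; [lra | exact Eu | | now apply ex_RInt_scalR].
    apply ex_RInt_cont01, cont01_dG.
Qed.

End SliceDissipation.

Ltac continuity_2d_rules :=
  repeat first [ apply continuity_2d_pt_const | apply continuity_2d_pt_sqr
               | apply continuity_2d_pt_minus | apply continuity_2d_pt_plus
               | apply continuity_2d_pt_mult | (apply extend_continuous; assumption) ].

Definition weighted_energy (k : R) (u1 u2 : R -> R -> R) (s : R) : R :=
  RInt (fun x => u1 x s ^ 2 + k * u2 x s ^ 2) 0 1.

Section EnergyDecay.
Variables (e1 e2 c1 c2 k rate t0 : R) (w1 w1x w1xx w1t w2 w2x w2xx w2t : R -> R -> R).
Hypotheses (He1 : 0 <= e1) (He2 : 0 <= e2) (Hk : 0 < k)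
  (Hrate1 : rate <= e1 / 2 + 2 * c1) (Hrate2 : rate <= e2 / 2 + 2 * c2).
Hypotheses (S1 : classical_sol e1 c1 t0 w1 w1x w1xx w1t)
  (S2 : classical_sol e2 c2 t0 w2 w2x w2xx w2t).
Hypotheses
  (Hflux : forall s, t0 <= s -> e1 * w1 0 s * w1x 0 s + e2 * k * w2 0 s * w2x 0 s = 0)
  (Hdir : forall s, t0 <= s -> w1 1 s = 0 /\ w2 1 s = 0).

(* The energy of the extended solution is defined and continuous for all
   times and coincides with the true energy for s >= t0. *)
Let Eext : R -> R := weighted_energy k (extend t0 w1) (extend t0 w2).

Let dE (s : R) : R := RInt (fun x => 2 * w1 x s * w1t x s + k * (2 * w2 x s * w2t x s)) 0 1.

Lemma extended_energy_eq s : t0 <= s -> Eext s = weighted_energy k w1 w2 s.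
Proof.
  intros Hs. apply RInt_ext. intros x Hx. rewrite Rmin_left, Rmax_right in Hx by lra.
  rewrite !extend_eq; [reflexivity | split; lra ..].
Qed.

Lemma extended_energy_continuous s : continuity_pt Eext s.
Proof.
  destruct S1 as [_ [C1 _]]. destruct S2 as [_ [C2 _]].
  apply (RInt_param_continuous (fun x s => extend t0 w1 x s ^ 2 + k * extend t0 w2 x s ^ 2)).
  intros x t. continuity_2d_rules.
Qed.

Lemma extended_energy_derivative s : t0 < s -> derivable_pt_lim Eext s (dE s).
Proof.
  intros Hs.
  destruct S1 as [D1 [C1 [_ [_ [C1t _]]]]]. destruct S2 as [D2 [C2 [_ [_ [C2t _]]]]].
  eapply deriv_eq.
  - apply (RInt_param_derivable (fun x s => extend t0 w1 x s ^ 2 + k * extend t0 w2 x s ^ 2)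
      (fun x s => 2 * extend t0 w1 x s * extend t0 w1t x s
                  + k * (2 * extend t0 w2 x s * extend t0 w2t x s)) t0); [| | | exact Hs].
    + intros x t. continuity_2d_rules.
    + intros x t. continuity_2d_rules.
    + intros x r Hx Hr.
      destruct (D1 x r (conj Hx Hr)) as [_ [_ Dt1]]. destruct (D2 x r (conj Hx Hr)) as [_ [_ Dt2]].
      apply deriv_local with (fun s => w1 x s ^ 2 + k * w2 x s ^ 2) (r - t0); [lra | |].
      * intros y Hy. apply Rabs_def2 in Hy. rewrite !extend_eq; [reflexivity | split; lra ..].
      * rewrite !extend_eq by (split; lra). eapply deriv_eq; [derivative_rules | cbv beta; ring].
  - apply RInt_ext. intros x Hx. rewrite Rmin_left, Rmax_right in Hx by lra.
    rewrite !extend_eq; [reflexivity | split; lra ..].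
Qed.

(* The PDE turns the rate into the left-hand side of the slice dissipation
   inequality at time s. *)
Lemma energy_rate_bound s : t0 < s -> dE s <= - rate * weighted_energy k w1 w2 s.
Proof.
  intros Hs.
  destruct S1 as [D1 [C1 [C1x [C1xx [_ P1]]]]]. destruct S2 as [D2 [C2 [C2x [C2xx [_ P2]]]]].
  assert (Hpde : dE s = RInt (fun x => 2 * w1 x s * (e1 * w1xx x s - c1 * w1 x s)
                                       + k * (2 * w2 x s * (e2 * w2xx x s - c2 * w2 x s))) 0 1).
  { apply RInt_ext. intros x Hx. rewrite Rmin_left, Rmax_right in Hx by lra.
    rewrite P1, P2 by (split; lra). reflexivity. }
  rewrite Hpde. destruct (Hdir s) as [Hd1 Hd2]; [lra |].
  apply (slice_dissipation (fun x => w1 x s) (fun x => w1x x s) (fun x => w1xx x s)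
           (fun x => w2 x s) (fun x => w2x x s) (fun x => w2xx x s) e1 e2 c1 c2 k rate);
    try assumption.
  all: first [ intros x Hx; destruct (D1 x s (conj Hx Hs)) as [? [? _]]; assumption
             | intros x Hx; destruct (D2 x s (conj Hx Hs)) as [? [? _]]; assumption
             | apply cont01_slice with t0; [assumption | lra]
             | apply Hflux; lra ].
Qed.

Theorem weighted_energy_decay t : t0 <= t ->
  weighted_energy k w1 w2 t <= exp (- rate * (t - t0)) * weighted_energy k w1 w2 t0.
Proof.
  intros Ht. rewrite <- !extended_energy_eq by lra.
  apply exponential_decay with dE; [exact Ht | | |].
  - intros r _. apply extended_energy_continuous.
  - intros r Hr. apply extended_energy_derivative. lra.
  - intros r Hr. rewrite extended_energy_eq by lra. apply energy_rate_bound. lra.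
Qed.

End EnergyDecay.

Lemma fold_ratio_range y0 : -1 < y0 <= 0 -> 0 < (1 + y0) / (1 - y0) <= 1.
Proof.
  intros Hy0. split; [apply Rdiv_lt_0_compat; lra |].
  apply Rmult_le_reg_r with (1 - y0); [lra |].
  unfold Rdiv. rewrite Rmult_assoc, Rinv_l by lra. lra.
Qed.

Lemma fold_diffusivity_order eps y0 : 0 < eps -> -1 < y0 <= 0 ->
  eps / (1 - y0) ^ 2 <= eps / (1 + y0) ^ 2.
Proof.
  intros Heps Hy0. unfold Rdiv. apply Rmult_le_compat_l; [lra |].
  apply Rinv_le_contravar; [apply pow_lt; lra | simpl; nra].
Qed.

Lemma fold_diffusivity_relation eps y0 : -1 < y0 <= 0 ->
  eps / (1 - y0) ^ 2 * / ((1 + y0) / (1 - y0)) = eps / (1 + y0) ^ 2 * ((1 + y0) / (1 - y0)).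
Proof. intros Hy0. field. lra. Qed.

Lemma inv_le_Rpower_sq a : 0 < a <= 1 -> / a <= Rpower a (- (3 / 2)) ^ 2.
Proof.
  intros Ha.
  assert (Hcube : Rpower a (- (3 / 2)) ^ 2 = / a ^ 3).
  { rewrite Rpower_Ropp. simpl. rewrite Rmult_1_r, <- Rinv_mult, <- Rpower_plus.
    replace (3 / 2 + 3 / 2) with (INR 3) by (simpl; lra).
    now rewrite Rpower_pow by lra. }
  rewrite Hcube. apply Rinv_le_contravar; [apply pow_lt; lra | simpl; nra].
Qed.

Lemma L2_weighted_energy_bounds k u1 u2 t (pr : Riemann_integrable (L2_integrand u1 u2 t) 0 1) :
  1 <= k -> cont01 (fun x => u1 x t) -> cont01 (fun x => u2 x t) ->
  0 <= RiemannInt pr /\ RiemannInt pr <= weighted_energy k u1 u2 t <= k * RiemannInt pr.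
Proof.
  intros Hk C1 C2.
  assert (Hex : ex_RInt (L2_integrand u1 u2 t) 0 1) by (apply ex_RInt_Reals_1; exact pr).
  assert (Hexw : ex_RInt (fun x => u1 x t ^ 2 + k * u2 x t ^ 2) 0 1).
  { apply ex_RInt_cont01. intros x. continuity_rules. }
  rewrite <- (RInt_Reals _ _ _ pr). unfold weighted_energy, L2_integrand in *.
  pose proof (fun x => pow2_ge_0 (u1 x t)). pose proof (fun x => pow2_ge_0 (u2 x t)).
  split; [| split].
  - apply RInt_ge_0; [lra | exact Hex |]. intros x _. specialize (H x). specialize (H0 x). lra.
  - apply RInt_le; [lra | exact Hex | exact Hexw |]. intros x _. specialize (H0 x). nra.
  - rewrite <- RInt_scalR by exact Hex. apply RInt_le; [lra | exact Hexw | now apply ex_RInt_scalR |].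
    intros x _. specialize (H x). nra.
Qed.

Lemma decay_rate_admissible a c1 c2 e1 e2 : 0 < a <= 1 -> 0 < c1 -> e2 <= e1 ->
  2 * (Rmin (a ^ 3 * c1) c2 + e2 / 4) <= e1 / 2 + 2 * c1 /\
  2 * (Rmin (a ^ 3 * c1) c2 + e2 / 4) <= e2 / 2 + 2 * c2.
Proof.
  intros Ha Hc1 He. assert (Ha3 : a ^ 3 <= 1) by (simpl; nra).
  pose proof (Rmin_l (a ^ 3 * c1) c2). pose proof (Rmin_r (a ^ 3 * c1) c2).
  split; nra.
Qed.

Lemma transmission_flux eps y0 u1 u1x u2 u2x : -1 < y0 <= 0 ->
  u1 = u2 -> u1x + (1 + y0) / (1 - y0) * u2x = 0 ->
  eps / (1 + y0) ^ 2 * u1 * u1x + eps / (1 - y0) ^ 2 * / ((1 + y0) / (1 - y0)) * u2 * u2x = 0.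
Proof.
  intros Hy0 -> Hjump. rewrite fold_diffusivity_relation by exact Hy0.
  replace (_ + _) with (eps / (1 + y0) ^ 2 * u2 * (u1x + (1 + y0) / (1 - y0) * u2x)) by ring.
  rewrite Hjump. ring.
Qed.

Lemma norm_decay_of_energy_decay Nt N0 Et E0 k Pi g :
  0 <= N0 -> 0 <= Pi -> k <= Pi ^ 2 ->
  Nt <= Et -> Et <= exp (- (2 * g)) * E0 -> E0 <= k * N0 ->
  sqrt Nt <= Pi * exp (- g) * sqrt N0.
Proof.
  intros HN0 HPi Hk Ht Hdecay H0.
  assert (Hexp : exp (- (2 * g)) = exp (- g) ^ 2).
  { simpl. rewrite Rmult_1_r, <- exp_plus. f_equal. ring. }
  pose proof (exp_pos (- g)) as Hpos.
  rewrite <- (sqrt_pow2 (Pi * exp (- g))) by (apply Rmult_le_pos; lra).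
  rewrite <- sqrt_mult_alt by apply pow2_ge_0.
  apply sqrt_le_1_alt. rewrite Rpow_mult_distr, <- Hexp in *.
  pose proof (exp_pos (- (2 * g))).
  apply Rle_trans with (exp (- (2 * g)) * (k * N0)); [nra |].
  replace (Pi ^ 2 * exp (- (2 * g)) * N0) with (exp (- (2 * g)) * (Pi ^ 2 * N0)) by ring.
  apply Rmult_le_compat_l; [lra |]. now apply Rmult_le_compat_r.
Qed.

Theorem lemma1 (eps y0 c1 c2 t0 : R)
  (w1 w1x w1xx w1t w2 w2x w2xx w2t : R -> R -> R) :
  0 < eps -> -1 < y0 <= 0 -> 0 < c1 -> 0 < c2 ->
  let eps1 := eps / (1 + y0) ^ 2 in
  let eps2 := eps / (1 - y0) ^ 2 in
  let a := (1 + y0) / (1 - y0) in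
  classical_sol eps1 c1 t0 w1 w1x w1xx w1t ->
  classical_sol eps2 c2 t0 w2 w2x w2xx w2t ->
  (forall t, t0 <= t -> w1 0 t = w2 0 t) ->
  (forall t, t0 <= t -> w1x 0 t + a * w2x 0 t = 0) ->
  (forall t, t0 <= t -> w1 1 t = 0 /\ w2 1 t = 0) ->
  let Pi := Rpower a (- (3 / 2)) in
  let gamma := Rmin (a ^ 3 * c1) c2 + eps2 / 4 in
  forall t (ht : t0 <= t)
    (pr_t : Riemann_integrable (L2_integrand w1 w2 t) 0 1)
    (pr_0 : Riemann_integrable (L2_integrand w1 w2 t0) 0 1),
    sqrt (RiemannInt pr_t) <= Pi * exp (- gamma * (t - t0)) * sqrt (RiemannInt pr_0).
Proof.
  intros Heps Hy0 Hc1 Hc2 eps1 eps2 a S1 S2 Hcont Hjump Hdir Pi gamma t Ht pr_t pr_0.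
  pose proof (fold_ratio_range y0 Hy0) as Ha. fold a in Ha.
  pose proof (fold_diffusivity_order eps y0 Heps Hy0) as He21. fold eps1 eps2 in He21.
  assert (He2 : 0 < eps2) by (apply Rdiv_lt_0_compat; [lra | apply pow_lt; lra]).
  assert (Hk : 1 <= / a) by (rewrite <- Rinv_1; apply Rinv_le_contravar; lra).
  destruct (decay_rate_admissible a c1 c2 eps1 eps2 Ha Hc1 He21) as [Hrate1 Hrate2].
  assert (Hdecay : weighted_energy (/ a) w1 w2 t
                   <= exp (- (2 * gamma) * (t - t0)) * weighted_energy (/ a) w1 w2 t0).
  { apply (weighted_energy_decay eps1 eps2 c1 c2 (/ a) (2 * gamma) t0 w1 w1x w1xx w1t
             w2 w2x w2xx w2t); try assumption; try lra.
    intros s Hs. apply transmission_flux; auto. }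
  destruct (L2_weighted_energy_bounds (/ a) w1 w2 t pr_t Hk) as [_ [Nt _]];
    try (apply cont01_slice with t0; [apply S1 || apply S2 | exact Ht]).
  destruct (L2_weighted_energy_bounds (/ a) w1 w2 t0 pr_0 Hk) as [N0pos [_ N0]];
    try (apply cont01_slice with t0; [apply S1 || apply S2 | lra]).
  replace (- gamma * (t - t0)) with (- (gamma * (t - t0))) by ring.
  apply (norm_decay_of_energy_decay _ _ (weighted_energy (/ a) w1 w2 t)
           (weighted_energy (/ a) w1 w2 t0) (/ a)); try assumption.
  - unfold Pi, Rpower. left. apply exp_pos.
  - apply inv_le_Rpower_sq, Ha.
  - replace (- (2 * (gamma * (t - t0)))) with (- (2 * gamma) * (t - t0)) by ring. exact Hdecay.
Qed.
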